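(* Let $P$ and $Q$ be two probability distributions on a finite set $\mathcal{A}$ that are positive on $\mathcal{A}$. Then $$\min_{x\in\mathcal{A}}\frac{P(x)}{Q(x)}\cdot\chi^2(Q,P)\;\le\;\frac{\chi^2(P,Q)}{1+\chi^2(P,Q)}\;\le\;\max_{x\in\mathcal{A}}\frac{P(x)}{Q(x)}\cdot\chi^2(Q,P).$$
   Context: For positive probability distributions $P,Q$ on a finite set $\mathcal{A}$, the chi-squared divergence is $\chi^2(P,Q)=\sum_{x\in\mathcal{A}}\frac{(P(x)-Q(x))^2}{Q(x)}$; thus $\chi^2(Q,P)=\sum_{x\in\mathcal{A}}\frac{(Q(x)-P(x))^2}{P(x)}$. *)

From mathcomp Require Import all_boot all_order all_algebra.
Set Implicit Arguments. Unset Strict Implicit. Unset Printing Implicit Defensive.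
Import Order.TTheory GRing.Theory Num.Theory.
Local Open Scope ring_scope.

Definition chi2 (R : realFieldType) (A : finType) (P Q : A -> R) : R :=
  \sum_(x : A) (P x - Q x) ^+ 2 / Q x.

(* min / max over the (nonempty) finite set A of f; x0 : A is any element,
   used only as the seed of the iterated min/max. *)
Definition fmin (R : realFieldType) (A : finType) (x0 : A) (f : A -> R) : R :=
  \big[Num.min/f x0]_(x : A) f x.
Definition fmax (R : realFieldType) (A : finType) (x0 : A) (f : A -> R) : R :=
  \big[Num.max/f x0]_(x : A) f x.

From mathcomp Require Import all_boot all_order all_algebra.
From mathcomp Require Import ring lra.
Set Implicit Arguments. Unset Strict Implicit. Unset Printing Implicit Defensive.
Import Order.TTheory GRing.Theory Num.Theory.
Local Open Scope ring_scope.

(* Write r x = P x / Q x.  Termwise, (P - Q)^2 / Q = r (Q - P)^2 / P, which gives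
   the upper bound at once.  For the lower bound put S = sum P^2/Q = 1 + chi2 P Q
   and T = sum Q^2/P = 1 + chi2 Q P; if m <= r x everywhere, summing the pointwise
   inequality (P - m Q) (P - S Q)^2 >= 0 over x yields S^2 m (T - 1) <= S (S - 1),
   which is the claim after dividing by S. *)

Section FiniteExtrema.

Variables (R : realFieldType) (A : finType) (x0 : A) (f : A -> R).

Lemma fmin_le x : fmin x0 f <= f x.
Proof. by rewrite /fmin (bigD1 x) //= ge_min lexx. Qed.

Lemma le_fmax x : f x <= fmax x0 f.
Proof. by rewrite /fmax (bigD1 x) //= le_max lexx. Qed.

Lemma fmin_gt0 : (forall x, 0 < f x) -> 0 < fmin x0 f.
Proof.
move=> f_gt0; apply: (big_ind (fun y => 0 < y)) => // a b a_gt0 b_gt0.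
by rewrite lt_min a_gt0 b_gt0.
Qed.

End FiniteExtrema.

Section ChiSquared.

Variables (R : realFieldType) (A : finType) (P Q : A -> R).
Hypotheses (P_gt0 : forall x, 0 < P x) (Q_gt0 : forall x, 0 < Q x).

Lemma chi2_ge0 : 0 <= chi2 P Q.
Proof.
by apply: sumr_ge0 => x _; rewrite divr_ge0 ?sqr_ge0 ?ltW.
Qed.

Lemma chi2_le_scale_rev (M : R) :
  (forall x, P x <= M * Q x) -> chi2 P Q <= M * chi2 Q P.
Proof.
move=> PleMQ; rewrite /chi2 mulr_sumr; apply: ler_sum => x _.
have p_gt0 := P_gt0 x; have q_gt0 := Q_gt0 x.
have -> : (P x - Q x) ^+ 2 / Q x = P x / Q x * ((Q x - P x) ^+ 2 / P x).
  by field; rewrite !lt0r_neq0.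
apply: ler_wpM2r; first by rewrite divr_ge0 ?sqr_ge0 ?ltW.
by rewrite ler_pdivrMr.
Qed.

Hypotheses (sum_P : \sum_x P x = 1) (sum_Q : \sum_x Q x = 1).

Lemma chi2_sum_sqr : chi2 P Q = \sum_x P x ^+ 2 / Q x - 1.
Proof.
have -> : chi2 P Q = \sum_x (P x ^+ 2 / Q x - 2 * P x + Q x).
  by apply: eq_bigr => x _; field; rewrite lt0r_neq0.
by rewrite !big_split /= sumrN -mulr_sumr sum_P sum_Q; ring.
Qed.

End ChiSquared.

(* The difference of the two sides is (p - m q) (p - s q)^2 / (p q). *)
Lemma cubic_ratio_ineq (R : realFieldType) (p q m s : R) :
  0 < p -> 0 < q -> m * q <= p ->
  s ^+ 2 * m * (q ^+ 2 / p) <= (s ^+ 2 + 2 * m * s) * q - (2 * s + m) * p + p ^+ 2 / q.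
Proof.
move=> p_gt0 q_gt0 mq_le_p; rewrite -subr_ge0.
have -> : (s ^+ 2 + 2 * m * s) * q - (2 * s + m) * p + p ^+ 2 / q
          - s ^+ 2 * m * (q ^+ 2 / p) = (p - m * q) * (p - s * q) ^+ 2 / (p * q).
  by field; rewrite !lt0r_neq0.
apply: divr_ge0; last by rewrite mulr_ge0 ?ltW.
by rewrite mulr_ge0 ?sqr_ge0 ?subr_ge0.
Qed.

Lemma scale_chi2_rev_le (R : realFieldType) (A : finType) (P Q : A -> R) (m : R)
  (P_gt0 : forall x, 0 < P x) (Q_gt0 : forall x, 0 < Q x)
  (sum_P : \sum_x P x = 1) (sum_Q : \sum_x Q x = 1) :
  0 <= m -> (forall x, m * Q x <= P x) ->
  m * chi2 Q P <= chi2 P Q / (1 + chi2 P Q).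
Proof.
move=> m_ge0 mQ_le_P.
pose S := \sum_x P x ^+ 2 / Q x; pose T := \sum_x Q x ^+ 2 / P x.
have -> : chi2 P Q = S - 1 by exact: chi2_sum_sqr.
have -> : chi2 Q P = T - 1 by exact: chi2_sum_sqr.
have S_ge1 : 1 <= S by have := chi2_ge0 P Q_gt0; rewrite chi2_sum_sqr // -/S; lra.
have summed : S ^+ 2 * m * T <= S ^+ 2 + 2 * m * S - S - m.
  have : \sum_x S ^+ 2 * m * (Q x ^+ 2 / P x) <=
         \sum_x ((S ^+ 2 + 2 * m * S) * Q x - (2 * S + m) * P x + P x ^+ 2 / Q x).
    by apply: ler_sum => x _; exact: cubic_ratio_ineq.
  rewrite -mulr_sumr !big_split /= sumrN -!mulr_sumr sum_P sum_Q -/S -/T.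
  by rewrite !mulr1; lra.
have mS_ge0 : 0 <= m * (S - 1) ^+ 2 by rewrite mulr_ge0 ?sqr_ge0.
have -> : 1 + (S - 1) = S by ring.
rewrite ler_pdivlMr; last lra.
rewrite -(ler_pM2l (_ : 0 < S)); last lra.
lra.
Qed.

Theorem corollary2 (R : realFieldType) (A : finType) (x0 : A) (P Q : A -> R)
  (hP : forall x, 0 < P x) (hQ : forall x, 0 < Q x)
  (sP : \sum_(x : A) P x = 1) (sQ : \sum_(x : A) Q x = 1) :
  fmin x0 (fun x => P x / Q x) * chi2 Q P <= chi2 P Q / (1 + chi2 P Q)
  /\ chi2 P Q / (1 + chi2 P Q) <= fmax x0 (fun x => P x / Q x) * chi2 Q P.
Proof.
set r := fun x => P x / Q x.
have chi2PQ_ge0 := chi2_ge0 P hQ.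
split.
- apply: scale_chi2_rev_le => //; first exact/ltW/fmin_gt0/(fun x => divr_gt0 _ _).
  by move=> x; rewrite -ler_pdivlMr //; exact: (fmin_le x0 r x).
- have chi2_le : chi2 P Q <= fmax x0 r * chi2 Q P.
    apply: chi2_le_scale_rev => // x.
    by rewrite -ler_pdivrMr //; exact: (le_fmax x0 r x).
  apply: le_trans chi2_le; rewrite ler_pdivrMr; last lra.
  by rewrite ler_peMr // lerDl.
Qed.
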